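(* Let $r,s,t,a,b,c$ be real numbers with $t\neq0$, and let $M_{H,n}^{(3)}$, $M_{h,n}^{(3)}$ be the matrix sequences defined in the context (with $M_{h,n}^{(3)}$ extended to negative indices as described there). Then for every nonnegative integer $n$: $$M_{H,n}^{(3)}=bM_{h,n}^{(3)}+(c-rb)M_{h,n-1}^{(3)}+taM_{h,n-2}^{(3)},$$ $$M_{H,n}^{(3)}=aM_{h,n+1}^{(3)}+(b-ra)M_{h,n}^{(3)}+(c-rb-sa)M_{h,n-1}^{(3)}.$$
   Context: The third-order Horadam matrix sequence is the sequence of $3\times3$ matrices defined by $M_{H,n+3}^{(3)}=rM_{H,n+2}^{(3)}+sM_{H,n+1}^{(3)}+tM_{H,n}^{(3)}$ ($n\ge0$) with $M_{H,0}^{(3)}=\begin{pmatrix} b & c-rb & ta\\ a & b-ra & c-rb-sa\\ \frac{1}{t}(c-rb-sa) & a-\frac{r}{t}(c-rb-sa) & \frac1t\big(-sc+(t+rs)b+(s^2-rt)a\big)\end{pmatrix}$, $M_{H,1}^{(3)}=\begin{pmatrix} c & sb+ta & tb\\ b & c-rb & ta\\ a & b-ra & c-rb-sa\end{pmatrix}$, $M_{H,2}^{(3)}=\begin{pmatrix} rc+sb+ta & sc+tb & tc\\ c & sb+ta & tb\\ b & c-rb & ta\end{pmatrix}$. The generalized Tribonacci matrix sequence satisfies the same recurrence with $M_{h,0}^{(3)}=I_3$, $M_{h,1}^{(3)}=\begin{pmatrix} r&s&t\\1&0&0\\0&1&0\end{pmatrix}$, $M_{h,2}^{(3)}=\begin{pmatrix}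 r^2+s&rs+t&rt\\ r&s&t\\ 1&0&0\end{pmatrix}$; it is extended to negative indices by running the recurrence backwards, $M_{h,k}^{(3)}=\frac1t\big(M_{h,k+3}^{(3)}-rM_{h,k+2}^{(3)}-sM_{h,k+1}^{(3)}\big)$ for $k<0$. *)

From HB Require Import structures.
From mathcomp Require Import all_boot all_order all_algebra.
Set Implicit Arguments. Unset Strict Implicit. Unset Printing Implicit Defensive.
Import Order.TTheory GRing.Theory Num.Theory.
Local Open Scope ring_scope.

Definition mx3 (R : realFieldType) (rows : seq (seq R)) : 'M[R]_3 :=
  \matrix_(i < 3, j < 3) nth 0 (nth [::] rows i) j.

Section Defs.
Variables (R : realFieldType) (r s t : R).

(* forward iteration of the third-order recurrence X_{n+3} = r X_{n+2} + s X_{n+1} + t X_n: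
   rec3_triple A0 A1 A2 n = (X_n, X_{n+1}, X_{n+2}) *)
Fixpoint rec3_triple (A0 A1 A2 : 'M[R]_3) (n : nat) : 'M[R]_3 * 'M[R]_3 * 'M[R]_3 :=
  match n with
  | 0 => (A0, A1, A2)
  | n'.+1 => let: (x, y, z) := rec3_triple A0 A1 A2 n' in
             (y, z, r *: z + s *: y + t *: x)
  end.

Definition rec3 (A0 A1 A2 : 'M[R]_3) (n : nat) : 'M[R]_3 :=
  (rec3_triple A0 A1 A2 n).1.1.

(* backward iteration: rec3_back_triple A0 A1 A2 k = (X_{-k}, X_{-k+1}, X_{-k+2}),
   using X_m = t^-1 (X_{m+3} - r X_{m+2} - s X_{m+1}) *)
Fixpoint rec3_back_triple (A0 A1 A2 : 'M[R]_3) (k : nat) : 'M[R]_3 * 'M[R]_3 * 'M[R]_3 :=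
  match k with
  | 0 => (A0, A1, A2)
  | k'.+1 => let: (x, y, z) := rec3_back_triple A0 A1 A2 k' in
             (t^-1 *: (z - r *: y - s *: x), x, y)
  end.

Definition rec3_int (A0 A1 A2 : 'M[R]_3) (k : int) : 'M[R]_3 :=
  match k with
  | Posz n => rec3 A0 A1 A2 n
  | Negz k' => (rec3_back_triple A0 A1 A2 k'.+1).1.1
  end.

Definition Mh (k : int) : 'M[R]_3 :=
  rec3_int 1%:M
    (mx3 [:: [:: r; s; t]; [:: 1; 0; 0]; [:: 0; 1; 0]])
    (mx3 [:: [:: r ^+ 2 + s; r * s + t; r * t];
                                [:: r; s; t]; [:: 1; 0; 0]]) k.

Variables (a b c : R).

Definition MH0 : 'M[R]_3 :=
  mx3
   [:: [:: b; c - r * b; t * a];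
       [:: a; b - r * a; c - r * b - s * a];
       [:: t^-1 * (c - r * b - s * a); a - r / t * (c - r * b - s * a);
           t^-1 * (- (s * c) + (t + r * s) * b + (s ^+ 2 - r * t) * a)]].

Definition MH1 : 'M[R]_3 :=
  mx3
   [:: [:: c; s * b + t * a; t * b];
       [:: b; c - r * b; t * a];
       [:: a; b - r * a; c - r * b - s * a]].

Definition MH2 : 'M[R]_3 :=
  mx3
   [:: [:: r * c + s * b + t * a; s * c + t * b; t * c];
       [:: c; s * b + t * a; t * b];
       [:: b; c - r * b; t * a]].

Definition MH (n : nat) : 'M[R]_3 := rec3 MH0 MH1 MH2 n.

End Defs.

(* Both sides of each identity, as functions of n, solve the recurrence
   X_{n+3} = r X_{n+2} + s X_{n+1} + t X_n: the Horadam matrices by definition, and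
   the right-hand sides because they are linear combinations of shifts of the
   Tribonacci matrices, whose backward extension is the recurrence solved for its
   lowest term (this is where t != 0 is needed), so the recurrence holds at every
   integer index.  A solution is determined by three consecutive values, and the
   values at n = 0, 1, 2 agree by direct computation. *)

From HB Require Import structures.
From mathcomp Require Import all_boot all_order all_algebra.
From mathcomp Require Import ring zify.
Import Order.TTheory GRing.Theory Num.Theory.
Set Implicit Arguments. Unset Strict Implicit. Unset Printing Implicit Defensive.
Local Open Scope ring_scope.

Section LinearRecurrence.
Variables (R : comPzRingType) (V : lmodType R) (r s t : R).

Definition rec3_solution (F : nat -> V) :=
  forall n, F n.+3 = r *: F n.+2 + s *: F n.+1 + t *: F n.

Lemma rec3_solutionD F G :
  rec3_solution F -> rec3_solution G -> rec3_solution (fun n => F n + G n).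
Proof. by move=> hF hG n; rewrite hF hG !scalerDr addrACA (addrACA (r *: F n.+2)). Qed.

Lemma rec3_solutionZ k F : rec3_solution F -> rec3_solution (fun n => k *: F n).
Proof.
by move=> hF n; rewrite hF !scalerDr !scalerA (mulrC k r) (mulrC k s) (mulrC k t).
Qed.

Lemma rec3_solution_eq F G : rec3_solution F -> rec3_solution G ->
  F 0%N = G 0%N -> F 1%N = G 1%N -> F 2%N = G 2%N -> F =1 G.
Proof.
move=> hF hG e0 e1 e2.
suff eqF3 n : [/\ F n = G n, F n.+1 = G n.+1 & F n.+2 = G n.+2].
  by move=> n; case: (eqF3 n).
elim: n => [|n [en en1 en2]]; first by [].
by split=> //; rewrite hF hG en en1 en2.
Qed.

End LinearRecurrence.

Section Rec3.
Variables (R : realFieldType) (r s t : R) (A0 A1 A2 : 'M[R]_3).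
Local Notation X := (rec3_int r s t A0 A1 A2).

Lemma rec3_tripleE n :
  rec3_triple r s t A0 A1 A2 n =
    (rec3 r s t A0 A1 A2 n, rec3 r s t A0 A1 A2 n.+1, rec3 r s t A0 A1 A2 n.+2).
Proof.
elim: n => [|n IHn] //=; rewrite /rec3 /= IHn /=.
by case: (rec3_triple r s t A0 A1 A2 n) => [[x y] z].
Qed.

Lemma rec3_solution_rec3 : rec3_solution r s t (rec3 r s t A0 A1 A2).
Proof. by move=> n; rewrite {1}/rec3 /= rec3_tripleE. Qed.

Lemma rec3_back_tripleE k :
  rec3_back_triple r s t A0 A1 A2 k = (X (- k%:Z), X (1 - k%:Z), X (2 - k%:Z)).
Proof.
elim: k => [|k IHk] /=; first by [].
rewrite IHk; congr (_, X _, X _); lia.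
Qed.

Lemma rec3_int_recurrence (ht : t != 0) (k : int) :
  X (k + 3) = r *: X (k + 2) + s *: X (k + 1) + t *: X k.
Proof.
case: k => [n|m].
- have -> : Posz n + 3 = Posz n.+3 by lia.
  have -> : Posz n + 2 = Posz n.+2 by lia.
  have -> : Posz n + 1 = Posz n.+1 by lia.
  exact: rec3_solution_rec3.
- have -> : X (Negz m) = t^-1 *: (X (2 - m%:Z) - r *: X (1 - m%:Z) - s *: X (- m%:Z)).
    by rewrite /= rec3_back_tripleE.
  rewrite scalerA mulfV // scale1r.
  have -> : Negz m + 3 = 2 - m%:Z by lia.
  have -> : Negz m + 2 = 1 - m%:Z by lia.
  have -> : Negz m + 1 = - m%:Z by lia.
  by rewrite [RHS]addrC -(addrA (X _)) -opprD subrK.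
Qed.

Lemma rec3_solution_rec3_int_shift (ht : t != 0) (k : int) :
  rec3_solution r s t (fun n : nat => X (n%:Z + k)).
Proof.
move=> n; have := rec3_int_recurrence ht (n%:Z + k).
have -> : n%:Z + k + 3 = n.+3%:Z + k by lia.
have -> : n%:Z + k + 2 = n.+2%:Z + k by lia.
by have -> : n%:Z + k + 1 = n.+1%:Z + k by lia.
Qed.

End Rec3.

Section Expansion.
Variables (R : realFieldType) (r s t a b c : R).
Hypothesis ht : t != 0.

Ltac mx3_by_field :=
  rewrite /MH /Mh /= /rec3 /= /MH0 /MH1 /MH2 /mx3;
  apply/matrixP; case=> [[|[|[|?]]] ?] //; case=> [[|[|[|?]]] ?] //;
  rewrite !mxE /=; by field.

Lemma MH_expansion_b (n : nat) :
  MH r s t a b c n =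
    b *: Mh r s t n%:Z + (c - r * b) *: Mh r s t (n%:Z - 1)
    + (t * a) *: Mh r s t (n%:Z - 2).
Proof.
move: n; apply: rec3_solution_eq; first exact: rec3_solution_rec3.
- apply: rec3_solutionD; [apply: rec3_solutionD|]; apply: rec3_solutionZ;
    by [exact: rec3_solution_rec3 | exact: rec3_solution_rec3_int_shift].
- mx3_by_field.
- mx3_by_field.
- mx3_by_field.
Qed.

Lemma MH_expansion_a (n : nat) :
  MH r s t a b c n =
    a *: Mh r s t (n%:Z + 1) + (b - r * a) *: Mh r s t n%:Z
    + (c - r * b - s * a) *: Mh r s t (n%:Z - 1).
Proof.
move: n; apply: rec3_solution_eq; first exact: rec3_solution_rec3.
- apply: rec3_solutionD; [apply: rec3_solutionD|]; apply: rec3_solutionZ;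
    by [exact: rec3_solution_rec3 | exact: rec3_solution_rec3_int_shift].
- mx3_by_field.
- mx3_by_field.
- mx3_by_field.
Qed.

End Expansion.

Theorem theorem3p2 (R : realFieldType) (r s t a b c : R) (ht : t != 0) (n : nat) :
  MH r s t a b c n =
    b *: Mh r s t n%:Z + (c - r * b) *: Mh r s t (n%:Z - 1)
    + (t * a) *: Mh r s t (n%:Z - 2)
  /\
  MH r s t a b c n =
    a *: Mh r s t (n%:Z + 1) + (b - r * a) *: Mh r s t n%:Z
    + (c - r * b - s * a) *: Mh r s t (n%:Z - 1).
Proof. by split; [exact: MH_expansion_b | exact: MH_expansion_a]. Qed.
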